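(* Let $\overline{\mathcal{X}}$ be a partition of $\mathcal{X}$ and let $\mathbf{f}=\{f_n\}_{n=1}^\infty$ be a sequence of functions $f_n:\mathcal{X}^n\times\mathcal{Y}^n\to\mathcal{Z}_n$ such that $f_n$ is $\overline{\mathcal{X}}$-informative for every $n$. Then for every general source $(\mathbf{X},\mathbf{Y})$ that is smooth with respect to $\mathbf{Y}$, $$R(\mathbf{X}|\mathbf{Y}|\mathbf{f})=R_{\mathsf{SW}}([\mathbf{X}]_{\overline{\mathcal{X}}}|\mathbf{Y}).$$
   Context: Finite alphabets $\mathcal{X}=\{0,\dots,|\mathcal{X}|-1\}$, $\mathcal{Y}=\{0,\dots,|\mathcal{Y}|-1\}$. A general source $(\mathbf{X},\mathbf{Y})=\{(X^n,Y^n)\}_{n\ge1}$ is an arbitrary sequence of joint distributions $P_{X^nY^n}$ on $\mathcal{X}^n\times\mathcal{Y}^n$ (no stationarity, memorylessness or ergodicity is assumed). For a sequence $\mathbf{f}=\{f_n\}$, $f_n:\mathcal{X}^n\times\mathcal{Y}^n\to\mathcal{Z}_n$, a code $\Phi_n=(\varphi_n,\psi_n)$ consists of an encoder $\varphi_n:\mathcal{X}^n\to\mathcal{M}_n$ and a decoder $\psi_n:\mathcal{M}_n\times\mathcal{Y}^n\to\mathcal{Z}_n$, with error probability $\Pr(\psi_n(\varphi_n(X^n),Y^n)\ne f_n(X^n,Y^n))$. A rate $R$ is achievable if there are codes with error probability $\to0$ and $\limsup_n \frac1n\log|\mathcal{M}_n|\le R$; $R(\mathbf{X}|\mathbf{Y}|\mathbf{f})$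 is the infimum of achievable rates. The Slepian–Wolf rate $R_{\mathsf{SW}}(\mathbf{X}|\mathbf{Y})$ is $R(\mathbf{X}|\mathbf{Y}|\mathbf{f}^{\mathsf{id}})$ for $f_n^{\mathsf{id}}(\mathbf{x},\mathbf{y})=\mathbf{x}$ (for a source with first component on another finite alphabet the same definitions apply). Logs are base 2. A source is smooth with respect to $\mathbf{Y}$ if there is a constant $0<q<1$ independent of $n$ with $P_{X^nY^n}(\mathbf{x},\hat{\mathbf{y}})\ge qP_{X^nY^n}(\mathbf{x},\mathbf{y})$ for all $n$, $\mathbf{x}\in\mathcal{X}^n$ and $\mathbf{y},\hat{\mathbf{y}}\in\mathcal{Y}^n$ at Hamming distance $1$. For a partition $\overline{\mathcal{X}}$ of $\mathcal{X}$ and $x\in\mathcal{X}$, $[x]_{\overline{\mathcal{X}}}$ is the cell containing $x$; $[\mathbf{x}]_{\overline{\mathcal{X}}}=([x_1]_{\overline{\mathcal{X}}},\dots,[x_n]_{\overline{\mathcal{X}}})$. The source $([\mathbf{X}]_{\overline{\mathcal{X}}},\mathbf{Y})=\{([X^n]_{\overline{\mathcal{X}}},Y^n)\}$ has $P_{[X^n]Y^n}(\overline{\mathbf{x}},\mathbf{y})=\sum_{\mathbf{x}:[\mathbf{x}]_{\overline{\mathcal{X}}}=\overline{\mathbf{x}}}P_{X^nY^n}(\mathbf{x},\mathbf{y})$, on alphabet $\overline{\mathcal{X}}\times\mathcal{Y}$. For $a\in\mathcal{X}$, $\mathbf{x}\in\mathcal{X}^n$, $i\in[1:n]$, $a\mathbf{x}^{(-i)}$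 is $\mathbf{x}$ with its $i$th entry replaced by $a$; similarly $b\mathbf{y}^{(-i)}$. For a permutation $\sigma$ of $[1:n]$, $\sigma(\mathbf{x})$ is the sequence with $i$th entry $x_{\sigma(i)}$. $f_n$ is $\overline{\mathcal{X}}$-informative if (1) for each $i\in[1:n]$ there is a map $\xi_n^{(i)}:\mathcal{Z}_n^{|\mathcal{Y}|}\to\overline{\mathcal{X}}$ with $\xi_n^{(i)}\big((f_n(a\mathbf{x}^{(-i)},b\mathbf{y}^{(-i)}):b\in\mathcal{Y})\big)=[a]_{\overline{\mathcal{X}}}$ for all $a\in\mathcal{X}$, $(\mathbf{x},\mathbf{y})\in\mathcal{X}^n\times\mathcal{Y}^n$; and (2) $f_n(\sigma(\mathbf{x}),\mathbf{y})=f_n(\mathbf{x},\mathbf{y})$ for all $(\mathbf{x},\mathbf{y})$ and all permutations $\sigma$ of $[1:n]$ with $[\sigma(\mathbf{x})]_{\overline{\mathcal{X}}}=[\mathbf{x}]_{\overline{\mathcal{X}}}$. *)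

From mathcomp Require Import all_boot.
From Stdlib Require Import Reals ClassicalEpsilon.

Set Implicit Arguments.
Unset Strict Implicit.
Unset Printing Implicit Defensive.

(* A general source: for each n a (sub)probability table on X^n x Y^n. *)
Definition source (X Y : finType) :=
  forall n : nat, {ffun 'I_n -> X} -> {ffun 'I_n -> Y} -> R.

Definition is_source (X Y : finType) (P : source X Y) : Prop :=
  forall n : nat, (0 < n)%N ->
    (forall x y, (0 <= P n x y)%R) /\
    (\big[Rplus/0%R]_(x : {ffun 'I_n -> X}) \big[Rplus/0%R]_(y : {ffun 'I_n -> Y}) P n x y = 1)%R.

Definition hamming (T : finType) (n : nat) (u v : {ffun 'I_n -> T}) : nat :=
  #|[set i : 'I_n | u i != v i]|.

Definition smooth_wrt_Y (X Y : finType) (P : source X Y) : Prop :=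
  exists q : R, (0 < q < 1)%R /\
    forall n (x : {ffun 'I_n -> X}) (y y' : {ffun 'I_n -> Y}),
      hamming y y' = 1%N -> (P n x y' >= q * P n x y)%R.

Record code (X Y : finType) (Z : Type) (n : nat) := Code {
  msize : nat;
  enc : {ffun 'I_n -> X} -> 'I_msize;
  dec : 'I_msize -> {ffun 'I_n -> Y} -> Z
}.
Arguments msize {X Y Z n} c.
Arguments enc {X Y Z n} c x.
Arguments dec {X Y Z n} c m y.

Definition err_prob (X Y : finType) (Z : Type) (n : nat)
  (P : source X Y) (f : {ffun 'I_n -> X} -> {ffun 'I_n -> Y} -> Z)
  (c : code X Y Z n) : R :=
  \big[Rplus/0%R]_(x : {ffun 'I_n -> X}) \big[Rplus/0%R]_(y : {ffun 'I_n -> Y})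
    (if excluded_middle_informative (dec c (enc c x) y = f x y)
     then 0%R else P n x y).

Definition log2 (r : R) : R := (ln r / ln 2)%R.

(* R is achievable: codes with error -> 0 and limsup (1/n) log |M_n| <= R
   (limsup written out: for all eps > 0, eventually (1/n) log|M_n| <= R + eps). *)
Definition achievable (X Y : finType) (Z : nat -> Type) (P : source X Y)
  (f : forall n, {ffun 'I_n -> X} -> {ffun 'I_n -> Y} -> Z n) (r : R) : Prop :=
  exists c : forall n, code X Y (Z n) n,
    Un_cv (fun n => err_prob P (@f n) (c n)) 0%R /\
    forall eps : R, (0 < eps)%R -> exists N : nat, forall n : nat, (N <= n)%N ->
      (log2 (INR (msize (c n.+1))) / INR n.+1 <= r + eps)%R.

Definition is_inf (A : R -> Prop) (r : R) : Prop :=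
  (forall a, A a -> (r <= a)%R) /\
  (forall b, (forall a, A a -> (b <= a)%R) -> (b <= r)%R).

Definition cells (X : finType) (Pt : {set {set X}}) (n : nat)
  (x : {ffun 'I_n -> X}) : {ffun 'I_n -> {set X}} :=
  [ffun i => pblock Pt (x i)].

(* The source ([X], Y), on alphabet {set X} (only the cells of Pt carry mass). *)
Definition quot_source (X Y : finType) (Pt : {set {set X}}) (P : source X Y)
  : source {set X} Y :=
  fun n xb y => \big[Rplus/0%R]_(x : {ffun 'I_n -> X} | cells Pt x == xb) P n x y.

Definition f_id (A B : finType) :
  forall n, {ffun 'I_n -> A} -> {ffun 'I_n -> B} -> {ffun 'I_n -> A} :=
  fun n x _ => x.

Definition achievable_SW (A B : finType) (P : source A B) (r : R) : Prop :=
  @achievable A B (fun n => {ffun 'I_n -> A}) P (@f_id A B) r.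

Definition repl (T : finType) (n : nat) (x : {ffun 'I_n -> T}) (i : 'I_n) (a : T)
  : {ffun 'I_n -> T} := [ffun j => if j == i then a else x j].

Definition permute (T : finType) (n : nat) (s : 'I_n -> 'I_n) (x : {ffun 'I_n -> T})
  : {ffun 'I_n -> T} := [ffun i => x (s i)].

Definition informative (X Y : finType) (Pt : {set {set X}}) (Zn : Type) (n : nat)
  (fn : {ffun 'I_n -> X} -> {ffun 'I_n -> Y} -> Zn) : Prop :=
  (forall i : 'I_n, exists xi : (Y -> Zn) -> {set X},
      forall (a : X) (x : {ffun 'I_n -> X}) (y : {ffun 'I_n -> Y}),
        xi (fun b => fn (repl x i a) (repl y i b)) = pblock Pt a) /\
  (forall (s : 'I_n -> 'I_n), bijective s ->
      forall (x : {ffun 'I_n -> X}) (y : {ffun 'I_n -> Y}),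
        cells Pt (permute s x) = cells Pt x -> fn (permute s x) y = fn x y).

(* Achievability: a Slepian-Wolf code for the cell sequence [x]_Pt, together with the letter
   counts of x (|X| log (n+1) bits, a vanishing rate), lets the decoder find a sequence with
   the same cells and the same counts; it differs from x by a cell-preserving permutation, so
   it has the same value of f_n.

   Converse: by informativity, the cell of x_i can be read off the decoder outputs at all the
   y' that differ from y only at coordinate i; call i bad when one of these outputs is wrong.
   Smoothness makes each such y' about as likely as y, so by Markov's inequality the
   probability that more than n/d coordinates are bad is O(d) times the error probability.
   Hence [x]_Pt lies, with high probability, within Hamming distance n/d of the estimate
   read off the message, in a list of subexponential size; randomly binning that list costs
   only a vanishing extra rate. *)

From HB Require Import structures.
From mathcomp Require Import all_boot all_fingroup.
From Stdlib Require Import Reals ClassicalEpsilon Lra Lia FunctionalExtensionality.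
From mathcomp Require Import zify.

Set Implicit Arguments.
Unset Strict Implicit.
Unset Printing Implicit Defensive.

HB.instance Definition _ := Monoid.isComLaw.Build R 0%R Rplus
  (fun a b c => esym (Rplus_assoc a b c)) Rplus_comm Rplus_0_l.

Open Scope R_scope.

(** * Finite sums and real analysis *)

Lemma Rsum_le (I : Type) (r : seq I) (Pr : pred I) (F G : I -> R) :
  (forall i, Pr i -> F i <= G i) ->
  \big[Rplus/0]_(i <- r | Pr i) F i <= \big[Rplus/0]_(i <- r | Pr i) G i.
Proof. move=> h; apply: (big_ind2 (fun a b => a <= b)) => //; [lra | move=> *; lra]. Qed.

Lemma Rsum_ge0 (I : Type) (r : seq I) (Pr : pred I) (F : I -> R) :
  (forall i, Pr i -> 0 <= F i) -> 0 <= \big[Rplus/0]_(i <- r | Pr i) F i.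
Proof. move=> h; apply: (big_ind (fun a => 0 <= a)) => //; [lra | move=> *; lra]. Qed.

Lemma Rsum_mull (I : Type) (r : seq I) (Pr : pred I) (F : I -> R) c :
  c * \big[Rplus/0]_(i <- r | Pr i) F i = \big[Rplus/0]_(i <- r | Pr i) (c * F i).
Proof. by apply: (big_morph (fun x => c * x)); [move=> a b; ring | ring]. Qed.

Lemma Rsum_mulr (I : Type) (r : seq I) (Pr : pred I) (F : I -> R) c :
  (\big[Rplus/0]_(i <- r | Pr i) F i) * c = \big[Rplus/0]_(i <- r | Pr i) (F i * c).
Proof. rewrite Rmult_comm Rsum_mull; apply: eq_bigr => i _; ring. Qed.

Lemma INR_sum (I : Type) (r : seq I) (Pr : pred I) (F : I -> nat) :
  INR (\sum_(i <- r | Pr i) F i) = \big[Rplus/0]_(i <- r | Pr i) INR (F i).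
Proof. by apply: (big_morph INR); [move=> a b; exact: plus_INR | done]. Qed.

Lemma Rsum_const (T : finType) (K : R) : \big[Rplus/0]_(t : T) K = INR #|T| * K.
Proof.
rewrite big_const; elim: #|T| => [|m IH]; first by rewrite /= Rmult_0_l.
by rewrite iterS IH S_INR; ring.
Qed.

Definition indR (b : bool) : R := if b then 1 else 0.

Lemma indR_ge0 b : 0 <= indR b.
Proof. by rewrite /indR; case: b; lra. Qed.

Lemma Rsum_indR (T : finType) (A : {set T}) : \big[Rplus/0]_(t : T) indR (t \in A) = INR #|A|.
Proof.
rewrite -sum1_card INR_sum [RHS]big_mkcond /=; apply: eq_bigr => t _.
by rewrite /indR; case: (t \in A).
Qed.

Lemma Rsum_exchange4 (I1 I2 I3 I4 : finType) (F : I1 -> I2 -> I3 -> I4 -> R) :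
  \big[Rplus/0]_(a : I1) \big[Rplus/0]_(b : I2) \big[Rplus/0]_(c : I3)
     \big[Rplus/0]_(d : I4) F a b c d =
  \big[Rplus/0]_(c : I3) \big[Rplus/0]_(d : I4) \big[Rplus/0]_(a : I1)
     \big[Rplus/0]_(b : I2) F a b c d.
Proof.
under eq_bigr => a _ do rewrite exchange_big.
under eq_bigr => a _ do (under eq_bigr => c _ do rewrite exchange_big).
by rewrite exchange_big; under eq_bigr => c _ do rewrite exchange_big.
Qed.

Lemma exists_le_average (T : finType) (F : T -> R) B (t0 : T) :
  \big[Rplus/0]_t F t <= INR #|T| * B -> exists t, F t <= B.
Proof.
move=> h; apply: NNPP => hn.
have hlt t : B < F t by apply: Rnot_le_lt => ht; apply: hn; exists t.
have e : \big[Rplus/0]_t F t = \big[Rplus/0]_t (F t - B) + \big[Rplus/0]_(t : T) B.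
  by rewrite -big_split /=; apply: eq_bigr => t _; ring.
rewrite e Rsum_const (bigD1 t0) //= in h.
have : 0 <= \big[Rplus/0]_(t | t != t0) (F t - B) by apply: Rsum_ge0 => t _; have := hlt t; lra.
have := hlt t0; lra.
Qed.

Lemma INR_gt0 (a : nat) : (0 < a)%nat -> 0 < INR a.
Proof. by move=> h; apply: lt_0_INR; apply/ltP. Qed.

Lemma INR_expn a k : INR (expn a k) = INR a ^ k.
Proof. by elim: k => [|k IH] //; rewrite expnS mult_INR IH. Qed.

Lemma INR_subn a b : (b <= a)%nat -> INR (a - b)%nat = INR a - INR b.
Proof. by move=> h; rewrite minus_INR; [| apply/leP]. Qed.

Lemma ln_le x y : 0 < x -> x <= y -> ln x <= ln y.
Proof.
move=> hx hxy; case: (Req_dec x y) => [->|hne]; first lra.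
by apply: Rlt_le; apply: ln_increasing => //; lra.
Qed.

Lemma ln_le_sub1 x : 0 < x -> ln x <= x - 1.
Proof. by move=> hx; have := exp_ineq1_le (ln x); rewrite exp_ln //; lra. Qed.

Lemma ln_nat_ge0 a : (0 < a)%nat -> 0 <= ln (INR a).
Proof. by move=> ha; rewrite -ln_1; apply: ln_le; [lra | apply: (le_INR 1)]; apply/leP. Qed.

Lemma exists_nat_div_le c eps : 0 < eps -> exists N, (0 < N)%nat /\ c / INR N <= eps.
Proof.
move=> he; have [N hN] := INR_unbounded (c / eps).
have hN1 : 0 < INR N.+1 by apply: INR_gt0.
exists N.+1; split => //; rewrite S_INR in hN1 *.
apply: (Rmult_le_reg_r (INR N + 1)) => //; rewrite /Rdiv Rmult_assoc Rinv_l; last lra.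
have : c / eps * eps = c by field; lra.
have : c / eps * eps <= (INR N + 1) * eps by apply: Rmult_le_compat_r; lra.
lra.
Qed.

(* [ln y = 2 ln (sqrt y) <= 2 sqrt y], and [2 c sqrt y <= eps (y - 1)] once
   [sqrt y >= 4 c / eps]. *)
Lemma ln_sublinear c eps : 0 <= c -> 0 < eps ->
  exists N, forall n, (N <= n)%nat -> c * ln (INR n.+2) <= eps * INR n.+1.
Proof.
move=> hc he; set K := 4 * c / eps.
have hK : 0 <= K.
  by rewrite /K; apply: Rmult_le_pos; [lra | apply: Rlt_le; apply: Rinv_0_lt_compat].
have [N HN] := INR_unbounded (K * K); exists N => n hn.
have hy : INR N <= INR n.+2 by apply: le_INR; apply/leP; lia.
set y := INR n.+2 in hy *.
have y2 : 2 <= y by rewrite /y 2!S_INR; have := pos_INR n; lra.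
have hs := sqrt_sqrt y ltac:(lra).
have spos : 0 < sqrt y := sqrt_lt_R0 y ltac:(lra).
have sK : K <= sqrt y by rewrite -(sqrt_square K hK); apply: sqrt_le_1_alt; lra.
have hln : ln y = ln (sqrt y) + ln (sqrt y) by rewrite -ln_mult // hs.
have hls := ln_le_sub1 spos.
have -> : INR n.+1 = y - 1 by rewrite /y (S_INR n.+1); ring.
rewrite hln.
have eK : eps * K = 4 * c by rewrite /K; field; lra.
have h1 : c * (ln (sqrt y) + ln (sqrt y)) <= 2 * c * sqrt y by nra.
have h2 : 0 <= (sqrt y - K) * (eps * sqrt y) by apply: Rmult_le_pos; nra.
nra.
Qed.

Lemma Un_cv_squeeze (u v : nat -> R) N :
  (forall n, (N <= n)%nat -> 0 <= u n <= v n) -> Un_cv v 0 -> Un_cv u 0.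
Proof.
move=> huv hv eps he; have [N1 HN1] := hv eps he.
exists (maxn N N1) => n /leP hn; have := HN1 n; rewrite /R_dist => h.
have [h1 h2] := huv n (leq_trans (leq_maxl _ _) hn).
have := h (elimT leP (leq_trans (leq_maxr N N1) hn)).
by rewrite Rminus_0_r !Rabs_right; lra.
Qed.

Lemma Un_cv_inv_succ : Un_cv (fun n => / INR n.+1) 0.
Proof.
apply: cv_infty_cv_0 => M; have [N hN] := INR_unbounded M.
exists N => n /leP hn; apply: (Rlt_le_trans _ (INR N)); first lra.
by apply: le_INR; apply/leP; lia.
Qed.

Lemma Un_cv_affine (u : nat -> R) C : Un_cv u 0 -> Un_cv (fun n => C * u n + / INR n.+1) 0.
Proof.
move=> hu; rewrite -(Rplus_0_r 0) -{1}(Rmult_0_r C).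
apply: CV_plus Un_cv_inv_succ; apply: CV_mult hu => eps he.
by exists 0%nat => n _; rewrite /R_dist Rminus_diag Rabs_R0.
Qed.

Lemma common_inf (A B : R -> Prop) :
  (exists b, B b) -> (forall b, B b -> 0 <= b) ->
  (forall a, A a -> forall g, 0 < g -> B (a + g)) -> (forall b, B b -> A b) ->
  exists r, is_inf A r /\ is_inf B r.
Proof.
move=> [b0 Bb0] Bge0 AB BA.
have Eb : bound (fun x => B (- x)) by exists 0 => x Bx; have := Bge0 _ Bx; lra.
have Ene : exists x, B (- x) by exists (- b0); rewrite Ropp_involutive.
have [m [Hub Hlub]] := completeness _ Eb Ene.
have infB : is_inf B (- m).
  split=> [b Bb | lb Hlb].
    have : - b <= m by apply: Hub; rewrite Ropp_involutive.
    lra.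
  suff : m <= - lb by lra.
  by apply: Hlub => x Bx; have := Hlb _ Bx; lra.
exists (- m); split => //; split=> [a Aa | lb Hlb].
  apply: Rnot_lt_le => Hlt.
  by have := proj1 infB _ (AB a Aa ((- m - a) / 2) ltac:(lra)); lra.
by apply: (proj2 infB) => b Bb; exact: Hlb _ (BA _ Bb).
Qed.

Lemma ln2_pos : 0 < ln 2.
Proof. by have := ln_lt_2; lra. Qed.

Lemma log2_mul a b : (0 < a)%nat -> (0 < b)%nat ->
  log2 (INR (a * b)) = log2 (INR a) + log2 (INR b).
Proof.
move=> ha hb; rewrite /log2 mult_INR ln_mult; try exact: INR_gt0.
by field; have := ln2_pos; lra.
Qed.

Lemma log2_expn a k : (0 < a)%nat -> log2 (INR (expn a k)) = INR k * log2 (INR a).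
Proof.
move=> ha; rewrite /log2 INR_expn ln_pow; last exact: INR_gt0.
by field; have := ln2_pos; lra.
Qed.

Lemma log2_nat_ge0 a : (0 < a)%nat -> 0 <= log2 (INR a).
Proof.
move=> ha; apply: Rmult_le_pos; first exact: ln_nat_ge0.
by apply: Rlt_le; apply: Rinv_0_lt_compat; exact: ln2_pos.
Qed.

Lemma log2_div_le c A b l : 0 < l -> c * ln A <= b * ln 2 * l -> c * log2 A / l <= b.
Proof.
move=> hl h; have hl2 := ln2_pos.
apply: (Rmult_le_reg_r l) => //; apply: (Rmult_le_reg_r (ln 2)) => //.
by rewrite /log2 (_ : c * (ln A / ln 2) / l * l * ln 2 = c * ln A); [lra | field; lra].
Qed.

(** * Codes and the cell source *)

Definition miss (Q : Prop) : R := if excluded_middle_informative Q then 0 else 1.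

Lemma miss_ge0 Q : 0 <= miss Q.
Proof. by rewrite /miss; case: excluded_middle_informative => ? /=; lra. Qed.

Lemma miss_le1 Q : miss Q <= 1.
Proof. by rewrite /miss; case: excluded_middle_informative => ? /=; lra. Qed.

Lemma err_probE (A Y : finType) (Zn : Type) n (P : source A Y) fn (c : code A Y Zn n) :
  err_prob P fn c =
  \big[Rplus/0]_(x : {ffun 'I_n -> A}) \big[Rplus/0]_(y : {ffun 'I_n -> Y})
     (miss (dec c (enc c x) y = fn x y) * P n x y).
Proof.
apply: eq_bigr => x _; apply: eq_bigr => y _; rewrite /miss.
by case: excluded_middle_informative => ? /=; ring.
Qed.

Lemma err_prob_ge0 (A Y : finType) (Zn : Type) n (P : source A Y) fn (c : code A Y Zn n) :
  (forall x y, 0 <= P n x y) -> 0 <= err_prob P fn c.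
Proof.
move=> hP; rewrite err_probE; apply: Rsum_ge0 => x _; apply: Rsum_ge0 => y _.
exact: Rmult_le_pos (miss_ge0 _) (hP _ _).
Qed.

Lemma msize_gt0 (A Y : finType) (Zn : Type) n (c : code A Y Zn n) (x : {ffun 'I_n -> A}) :
  (0 < msize c)%nat.
Proof. by case: c x => m e d x /=; have := ltn_ord (e x); case: m e d. Qed.

Section CellSource.
Variables (X Y : finType) (Pt : {set {set X}}).

Lemma quot_source_sum (P : source X Y) n (w : {ffun 'I_n -> {set X}} -> {ffun 'I_n -> Y} -> R) :
  \big[Rplus/0]_(xb : {ffun 'I_n -> {set X}}) \big[Rplus/0]_(y : {ffun 'I_n -> Y})
     (w xb y * quot_source Pt P xb y) =
  \big[Rplus/0]_(x : {ffun 'I_n -> X}) \big[Rplus/0]_(y : {ffun 'I_n -> Y})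
     (w (cells Pt x) y * P n x y).
Proof.
rewrite (partition_big (fun x => cells Pt x) predT) //=.
apply: eq_bigr => xb _; rewrite exchange_big /=; apply: eq_bigr => y _.
by rewrite /quot_source Rsum_mull; apply: eq_bigr => x /eqP ->.
Qed.

Lemma quot_source_ge0 (P : source X Y) n : (forall x y, 0 <= P n x y) ->
  forall (xb : {ffun 'I_n -> {set X}}) (y : {ffun 'I_n -> Y}), 0 <= quot_source Pt P xb y.
Proof. by move=> hP xb y; apply: Rsum_ge0 => x _; exact: hP. Qed.

Lemma quot_source_total (P : source X Y) n :
  \big[Rplus/0]_(xb : {ffun 'I_n -> {set X}}) \big[Rplus/0]_(y : {ffun 'I_n -> Y})
     quot_source Pt P xb y =
  \big[Rplus/0]_(x : {ffun 'I_n -> X}) \big[Rplus/0]_(y : {ffun 'I_n -> Y}) P n x y.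
Proof.
transitivity (\big[Rplus/0]_(xb : {ffun 'I_n -> {set X}}) \big[Rplus/0]_(y : {ffun 'I_n -> Y})
                 (1 * quot_source Pt P xb y)).
  by apply: eq_bigr => xb _; apply: eq_bigr => y _; ring.
by rewrite (quot_source_sum P (fun _ _ => 1)); apply: eq_bigr => x _; apply: eq_bigr => y _; ring.
Qed.

Lemma err_prob_quot (P : source X Y) n (c : code {set X} Y {ffun 'I_n -> {set X}} n) :
  err_prob (quot_source Pt P) (@f_id {set X} Y n) c =
  \big[Rplus/0]_(x : {ffun 'I_n -> X}) \big[Rplus/0]_(y : {ffun 'I_n -> Y})
     (miss (dec c (enc c (cells Pt x)) y = cells Pt x) * P n x y).
Proof. by rewrite err_probE quot_source_sum. Qed.

End CellSource.

(** * Achievability *)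

Definition letter_count (X : finType) n (x : {ffun 'I_n -> X}) : {ffun X -> 'I_n.+1} :=
  [ffun a => inord (count_mem a (map x (enum 'I_n)))].

Lemma letter_count_permute (X : finType) n (x x' : {ffun 'I_n -> X}) :
  letter_count x = letter_count x' -> exists s : 'I_n -> 'I_n, bijective s /\ permute s x = x'.
Proof.
move=> hc.
have hcount a : count_mem a (map x (enum 'I_n)) = count_mem a (map x' (enum 'I_n)).
  have := congr1 (fun g : {ffun X -> 'I_n.+1} => nat_of_ord (g a)) hc; rewrite /= !ffunE.
  by rewrite !inordK // ltnS; apply: (leq_trans (count_size _ _)); rewrite size_map size_enum_ord.
have hpe : perm_eq (map x' (enum 'I_n)) (map_tuple x (ord_tuple n)).
  by apply/allP => a _ /=; rewrite hcount.
have [p hp] := tuple_permP hpe.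
exists p; split; first exact: (injF_bij (@perm_inj _ p)).
apply/ffunP => i; rewrite ffunE.
have ht : map_tuple x' (ord_tuple n) = [tuple tnth (map_tuple x (ord_tuple n)) (p i) | i < n].
  by apply: val_inj; rewrite /= -hp.
have := congr1 (fun t => tnth t i) ht.
by rewrite tnth_map tnth_ord_tuple tnth_mktuple tnth_map tnth_ord_tuple => ->.
Qed.

Section TypeCode.
Variables (X Y : finType) (Pt : {set {set X}}) (Z : nat -> Type).
Variables (f : forall n, {ffun 'I_n -> X} -> {ffun 'I_n -> Y} -> Z n) (x0 : X).

Definition type_code n (cS : code {set X} Y {ffun 'I_n -> {set X}} n) : code X Y (Z n) n :=
  @Code X Y (Z n) n #|{: 'I_(msize cS) * {ffun X -> 'I_n.+1}}|
    (fun x => enum_rank (enc cS (cells Pt x), letter_count x))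
    (fun m y => let pr := enum_val m in
       match [pick x' | (cells Pt x' == dec cS pr.1 y) && (letter_count x' == pr.2)] with
       | Some x' => f x' y | None => f [ffun _ => x0] y end).

Lemma type_code_correct n (cS : code {set X} Y {ffun 'I_n -> {set X}} n) x y :
  informative Pt (@f n) ->
  dec cS (enc cS (cells Pt x)) y = cells Pt x ->
  dec (type_code cS) (enc (type_code cS) x) y = f x y.
Proof.
move=> [_ f_perm] hdec /=; rewrite enum_rankK /= hdec.
case: pickP => [x' /andP[/eqP hc /eqP hn]|/(_ x)]; last by rewrite !eqxx.
have [s [bs hs]] := letter_count_permute (esym hn).
by rewrite -hs f_perm // hs.
Qed.

Lemma type_code_err_le n (P : source X Y) (cS : code {set X} Y {ffun 'I_n -> {set X}} n) :
  informative Pt (@f n) -> (forall x y, 0 <= P n x y) ->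
  err_prob P (@f n) (type_code cS) <= err_prob (quot_source Pt P) (@f_id {set X} Y n) cS.
Proof.
move=> hf hP; rewrite err_prob_quot err_probE.
apply: Rsum_le => x _; apply: Rsum_le => y _; apply: Rmult_le_compat_r; first exact: hP.
rewrite {1}/miss; case: excluded_middle_informative => [_|hf_err] /=; first exact: miss_ge0.
rewrite /miss; case: excluded_middle_informative => [hdec|_] /=; last lra.
by case: hf_err; exact: type_code_correct.
Qed.

Lemma log2_msize_type_code n (cS : code {set X} Y {ffun 'I_n.+1 -> {set X}} n.+1) :
  log2 (INR (msize (type_code cS))) =
  log2 (INR (msize cS)) + INR #|X| * log2 (INR n.+2).
Proof.
rewrite /= card_prod card_ffun !card_ord log2_mul ?expn_gt0 ?log2_expn //.
exact: msize_gt0 [ffun=> set0].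
Qed.

End TypeCode.

Lemma achievable_of_achievable_SW (X Y : finType) (Pt : {set {set X}}) (Z : nat -> Type)
  (f : forall n, {ffun 'I_n -> X} -> {ffun 'I_n -> Y} -> Z n) (P : source X Y)
  (HP : is_source P) (Hf : forall n, informative Pt (f n)) (x0 : X) r :
  achievable_SW (quot_source Pt P) r -> achievable P f r.
Proof.
case=> cS [Hcv Hrate]; exists (fun n => type_code Pt f x0 (cS n)); split.
  apply: (Un_cv_squeeze (N := 1%nat) _ Hcv) => n hn; have hP := proj1 (HP n hn).
  by split; [exact: err_prob_ge0 | exact: type_code_err_le].
move=> eps he.
have [N1 HN1] := Hrate (eps / 2) ltac:(lra).
have he2 : 0 < eps / 2 * ln 2 by apply: Rmult_lt_0_compat; [lra | exact: ln2_pos].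
have [N2 HN2] := ln_sublinear (pos_INR #|X|) he2.
exists (maxn N1 N2) => n hn.
have h1 := HN1 n (leq_trans (leq_maxl _ _) hn).
have h2 := HN2 n (leq_trans (leq_maxr _ _) hn).
have hN := INR_gt0 (ltn0Sn n).
have hcount : INR #|X| * log2 (INR n.+2) / INR n.+1 <= eps / 2.
  by apply: log2_div_le.
rewrite log2_msize_type_code Rdiv_plus_distr.
by apply: (Rle_trans _ _ _ (Rplus_le_compat _ _ _ _ h1 hcount)); lra.
Qed.

(** * Converse *)

Section Replace.
Variables (T : finType) (n : nat).
Implicit Types (y : {ffun 'I_n -> T}) (i : 'I_n).

Lemma repl_at y i a : repl y i a i = a.
Proof. by rewrite ffunE eqxx. Qed.

Lemma repl_repl y i a b : repl (repl y i a) i b = repl y i b.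
Proof. by apply/ffunP => j; rewrite !ffunE; case: eqP. Qed.

Lemma repl_id y i : repl y i (y i) = y.
Proof. by apply/ffunP => j; rewrite !ffunE; case: eqP => // ->. Qed.

Lemma repl_eq_self y i c : (repl y i c == y) = (y i == c).
Proof. by apply/eqP/eqP => [<-|<-]; [rewrite repl_at | exact: repl_id]. Qed.

Lemma hamming_repl y i b : y i != b -> hamming y (repl y i b) = 1%nat.
Proof.
move=> hb; rewrite /hamming (_ : [set j | y j != repl y i b j] = [set i]) ?cards1 //.
apply/setP => j; rewrite !inE ffunE.
by case: (eqVneq j i) => [->|hj]; rewrite ?eqxx ?hb ?eqxx.
Qed.

(* Replacing one coordinate is a [|T|]-to-one map on sequences. *)
Lemma Rsum_repl_le (F : {ffun 'I_n -> T} -> R) i b :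
  (forall y, 0 <= F y) ->
  \big[Rplus/0]_(y : {ffun 'I_n -> T}) F (repl y i b) <= INR #|T| * \big[Rplus/0]_y F y.
Proof.
move=> hF.
rewrite (partition_big (fun y : {ffun 'I_n -> T} => y i) predT) //= -Rsum_const.
apply: Rsum_le => c _.
have -> : \big[Rplus/0]_(y : {ffun 'I_n -> T} | y i == c) F (repl y i b) =
          \big[Rplus/0]_(y : {ffun 'I_n -> T} | y i == b) F y.
  rewrite (reindex_onto (fun y => repl y i b) (fun y => repl y i c)
             (P := fun y : {ffun 'I_n -> T} => y i == b)).
    by apply: eq_bigl => y; rewrite repl_at eqxx repl_repl repl_eq_self.
  by move=> y /eqP hy; rewrite repl_repl -hy repl_id.
rewrite [X in _ <= X](bigID (fun y : {ffun 'I_n -> T} => y i == b)) /=.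
rewrite -[X in X <= _]Rplus_0_r; apply: Rplus_le_compat; first exact: Rle_refl.
exact: Rsum_ge0.
Qed.

End Replace.

Lemma smooth_repl_le (X Y : finType) (P : source X Y) q n (x : {ffun 'I_n -> X})
  (y : {ffun 'I_n -> Y}) i b :
  0 < q < 1 ->
  (forall y y' : {ffun 'I_n -> Y}, hamming y y' = 1%nat -> P n x y' >= q * P n x y) ->
  0 <= P n x y -> P n x y <= / q * P n x (repl y i b).
Proof.
move=> hq hs hp.
have key : q * P n x y <= P n x (repl y i b).
  case: (eqVneq (y i) b) => [<-|hb]; first by rewrite repl_id; nra.
  by have := hs _ _ (hamming_repl hb); lra.
have eq1 : / q * q = 1 by field; lra.
rewrite -[P n x y]Rmult_1_l -eq1 Rmult_assoc; apply: Rmult_le_compat_l => //.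
by apply: Rlt_le; apply: Rinv_0_lt_compat; lra.
Qed.

Lemma card_ffun_collide (D : finType) L (a b : D) : a != b ->
  (\sum_(g : {ffun D -> 'I_L}) (g a == g b) = L * expn L (#|D| - 2))%nat.
Proof.
move=> hab; pose c x := (x == a) || (x == b).
have e1 (g : {ffun D -> 'I_L}) : (g a == g b : nat) =
   (\sum_(v < L) \prod_(x : D) (if c x then (g x == v : nat) else 1))%nat.
  have e2 v : (\prod_(x : D) (if c x then (g x == v : nat) else 1) = (g a == v) * (g b == v))%nat.
    rewrite (bigD1 a) //= (bigD1 b) /=; last by rewrite eq_sym hab.
    rewrite /c !eqxx orbT /= big1 ?muln1 //.
    by move=> x /andP[hxa hxb]; rewrite (negbTE hxa) (negbTE hxb).
  rewrite (eq_bigr _ (fun v _ => e2 v)) (bigD1 (g a)) //= big1 ?addn0.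
    by rewrite eqxx mul1n eq_sym.
  by move=> v hv; rewrite eq_sym (negbTE hv).
rewrite (eq_bigr _ (fun g _ => e1 g)) exchange_big /=.
have e3 (v : 'I_L) : (\sum_(g : {ffun D -> 'I_L})
    \prod_(x : D) (if c x then (g x == v : nat) else 1) = expn L (#|D| - 2))%nat.
  rewrite -(bigA_distr_bigA (fun x (w : 'I_L) => if c x then (w == v : nat) else 1%nat)) /=.
  have e4 x : (\sum_(w < L) (if c x then (w == v : nat) else 1) = if c x then 1 else L)%nat.
    case: (c x); first by rewrite (bigD1 v) //= eqxx big1 // => w /negbTE ->.
    by rewrite sum_nat_const card_ord muln1.
  rewrite (eq_bigr _ (fun x _ => e4 x)).
  rewrite (eq_bigr (fun x => if ~~ c x then L else 1%nat)); last by move=> x _; case: (c x).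
  rewrite -big_mkcond /= prod_nat_const; congr (expn _ _).
  have := cardC c; rewrite -addnC => <-.
  rewrite (_ : #|c| = 2)%nat ?addnK //.
  by have := cards2 a b; rewrite hab => <-; apply: eq_card => x; rewrite !inE.
by rewrite (eq_bigr _ (fun v _ => e3 v)) sum_nat_const card_ord.
Qed.

(* Weight each sequence by [T0 ^ (number of agreements with e)]: the total weight is
   [(T0 + |T|) ^ n], and each point of the ball weighs at least [T0 ^ (n - k)]. *)
Lemma hamming_ball_card (T : finType) n (e : {ffun 'I_n -> T}) k T0 : (0 < T0)%nat ->
  (#|[set xb : {ffun 'I_n -> T} | (#|[set i | xb i != e i]| <= k)%nat]| * expn T0 (n - k)
     <= expn (T0 + #|T|) n)%nat.
Proof.
move=> hT0; set S := [set xb : {ffun 'I_n -> T} | _].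
pose agree (xb : {ffun 'I_n -> T}) := #|[set i | xb i == e i]|.
have agree_ge xb : xb \in S -> (n - k <= agree xb)%nat.
  rewrite inE => hk; have hc := cardsC [set i | xb i == e i].
  rewrite card_ord (_ : (~: [set i | xb i == e i]) = [set i | xb i != e i]) in hc; last first.
    by apply/setP => i; rewrite !inE.
  by rewrite /agree; move: hc hk; move: #|[set i | xb i == e i]| #|[set i | xb i != e i]|; lia.
have weightE (xb : {ffun 'I_n -> T}) :
    expn T0 (agree xb) = (\prod_(i : 'I_n) (if xb i == e i then T0 else 1))%nat.
  by rewrite /agree -big_mkcond /= -prod_nat_const; apply: eq_bigl => i; rewrite inE.
apply: (@leq_trans (\sum_(xb in S) expn T0 (agree xb))).
  by rewrite -sum_nat_const; apply: leq_sum => xb hxb; exact: leq_pexp2l hT0 (agree_ge _ hxb).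
apply: (@leq_trans (\sum_(xb : {ffun 'I_n -> T}) expn T0 (agree xb))).
  by rewrite [X in (_ <= X)%nat](bigID (fun xb => xb \in S)) /=; exact: leq_addr.
rewrite (eq_bigr _ (fun xb _ => weightE xb)).
rewrite -(bigA_distr_bigA (fun (i : 'I_n) (v : T) => if v == e i then T0 else 1%nat)) /=.
apply: (@leq_trans (\prod_(i : 'I_n) (T0 + #|T|))%nat); last by rewrite prod_nat_const card_ord.
apply: leq_prod => i _; rewrite (bigD1 (e i)) //= eqxx leq_add2l -sum1_card.
rewrite [X in (_ <= X)%nat](bigID (fun v => v != e i)) /=.
by apply: leq_trans (leq_addr _ _); apply: leq_sum => v /negbTE ->.
Qed.

Lemma card_exists_leq_sum (T I : finType) (Q : I -> T -> bool) :
  (#|[set x | [exists m, Q m x]]| <= \sum_m #|[set x | Q m x]|)%nat.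
Proof.
rewrite -sum1_card.
apply: (@leq_trans (\sum_(x in [set x | [exists m, Q m x]]) \sum_m (Q m x : nat))%nat).
  by apply: leq_sum => x; rewrite inE => /existsP[m hm]; rewrite (bigD1 m) //= hm leq_addr.
apply: (@leq_trans (\sum_x \sum_m (Q m x : nat))%nat).
  by rewrite [X in (_ <= X)%nat](bigID (fun x => x \in [set x | [exists m, Q m x]])) leq_addr.
rewrite exchange_big; apply: leq_sum => m _.
rewrite -sum1_card [X in (_ <= X)%nat]big_mkcond /=.
by apply: leq_sum => x _; rewrite inE; case: (Q m x).
Qed.

Section Binning.
Variables (A Y : finType) (n L : nat) (xb0 : {ffun 'I_n -> A}).
Variable G : {ffun 'I_n -> Y} -> {set {ffun 'I_n -> A}}.
Implicit Types (g : {ffun {ffun 'I_n -> A} -> 'I_L}) (xb : {ffun 'I_n -> A}) (y : {ffun 'I_n -> Y}).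

Definition bin_code (g : {ffun {ffun 'I_n -> A} -> 'I_L}) : code A Y {ffun 'I_n -> A} n :=
  @Code A Y {ffun 'I_n -> A} n L (fun xb => g xb)
    (fun l y => if [pick xb' in G y | g xb' == l] is Some xb' then xb' else xb0).

Lemma bin_code_correct g xb y :
  xb \in G y -> (forall xb', xb' \in G y -> xb' != xb -> g xb' != g xb) ->
  dec (bin_code g) (enc (bin_code g) xb) y = xb.
Proof.
move=> hx hu /=; case: pickP => [xb' /andP[hx' /eqP hg]|/(_ xb)]; last by rewrite hx eqxx.
by case: (eqVneq xb' xb) => // hne; have := hu _ hx' hne; rewrite hg eqxx.
Qed.

Lemma bin_code_miss_le g xb y : xb \in G y ->
  miss (dec (bin_code g) (enc (bin_code g) xb) y = xb) <=
  \big[Rplus/0]_(xb' : {ffun 'I_n -> A}) indR [&& xb' \in G y, xb' != xb & g xb' == g xb].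
Proof.
move=> hx; rewrite {1}/miss; case: excluded_middle_informative => [_|hbad] /=.
  by apply: Rsum_ge0 => *; exact: indR_ge0.
have [xb' [hx' hne hg]] : exists xb', [/\ xb' \in G y, xb' != xb & g xb' = g xb].
  apply: NNPP => hno; apply: hbad; apply: bin_code_correct => // xb' hx' hne.
  by apply/negP => /eqP hg; apply: hno; exists xb'.
rewrite (bigD1 xb') //= hx' hne hg eqxx.
set others := (X in _ + X).
have : 0 <= others by apply: Rsum_ge0 => *; exact: indR_ge0.
by rewrite /indR /=; lra.
Qed.

Lemma Rsum_bin_collide (a b : {ffun 'I_n -> A}) : (0 < L)%nat -> a != b ->
  \big[Rplus/0]_(g : {ffun {ffun 'I_n -> A} -> 'I_L}) indR (g a == g b) =
  INR #|{: {ffun {ffun 'I_n -> A} -> 'I_L}}| / INR L.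
Proof.
move=> hL hab.
have -> : \big[Rplus/0]_(g : {ffun {ffun 'I_n -> A} -> 'I_L}) indR (g a == g b) =
          INR (\sum_(g : {ffun {ffun 'I_n -> A} -> 'I_L}) (g a == g b)).
  by rewrite INR_sum; apply: eq_bigr => g _; rewrite /indR; case: (g a == g b).
have hD : (1 < #|{: {ffun 'I_n -> A}}|)%nat by apply/card_gt1P; exists a, b.
rewrite card_ffun card_ord card_ffun_collide //.
have -> : expn L #|{: {ffun 'I_n -> A}}| = (L * (L * expn L (#|{: {ffun 'I_n -> A}}| - 2)))%nat.
  by rewrite -!expnS; congr expn; lia.
rewrite !mult_INR [RHS]Rmult_comm -Rmult_assoc Rinv_l ?Rmult_1_l //; apply: not_0_INR; lia.
Qed.

Lemma bin_code_miss_sum K xb y : (0 < L)%nat -> (forall y, #|G y| <= K)%nat ->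
  \big[Rplus/0]_(g : {ffun {ffun 'I_n -> A} -> 'I_L})
     miss (dec (bin_code g) (enc (bin_code g) xb) y = xb)
  <= INR #|{: {ffun {ffun 'I_n -> A} -> 'I_L}}| * (indR (xb \notin G y) + INR K / INR L).
Proof.
move=> hL hK; set NF := INR #|{: {ffun {ffun 'I_n -> A} -> 'I_L}}|.
have hNF : 0 <= NF by apply: pos_INR.
have hLp := INR_gt0 hL.
have hLinv : 0 < / INR L by apply: Rinv_0_lt_compat.
have hKL : 0 <= INR K / INR L.
  by apply: Rmult_le_pos; [exact: pos_INR | apply: Rlt_le; exact: Rinv_0_lt_compat].
case hx: (xb \in G y); last first.
  rewrite /indR /=; apply: (Rle_trans _ (NF * 1)); last by apply: Rmult_le_compat_l; lra.
  by rewrite /NF -Rsum_const; apply: Rsum_le => g _; exact: miss_le1.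
rewrite /indR /= Rplus_0_l.
apply: (Rle_trans _ _ _ (Rsum_le _ (fun g _ => bin_code_miss_le g hx))).
rewrite exchange_big /=.
apply: (@Rle_trans _ (\big[Rplus/0]_(xb' : {ffun 'I_n -> A}) (indR (xb' \in G y) * (NF / INR L)))).
  apply: Rsum_le => xb' _; case: (xb' \in G y) => /=; last first.
    by rewrite /indR big1 //=; lra.
  case: (eqVneq xb' xb) => [_|hne] /=.
    by rewrite /indR big1 //=; apply: Rmult_le_pos; [lra | apply: Rmult_le_pos; lra].
  by rewrite Rsum_bin_collide // Rmult_1_l; exact: Rle_refl.
rewrite -Rsum_mulr Rsum_indR.
have hG : INR #|G y| <= INR K by apply: le_INR; apply/leP.
have : INR #|G y| * (NF / INR L) <= INR K * (NF / INR L).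
  by apply: Rmult_le_compat_r => //; apply: Rmult_le_pos => //; lra.
by have -> : NF * (INR K / INR L) = INR K * (NF / INR L) by rewrite /Rdiv; ring.
Qed.

Lemma exists_good_binning (S : source A Y) K : (0 < L)%nat ->
  (forall xb y, 0 <= S n xb y) ->
  \big[Rplus/0]_(xb : {ffun 'I_n -> A}) \big[Rplus/0]_(y : {ffun 'I_n -> Y}) S n xb y <= 1 ->
  (forall y, #|G y| <= K)%nat ->
  exists g : {ffun {ffun 'I_n -> A} -> 'I_L}, err_prob S (@f_id A Y n) (bin_code g) <=
    \big[Rplus/0]_(xb : {ffun 'I_n -> A}) \big[Rplus/0]_(y : {ffun 'I_n -> Y})
       (indR (xb \notin G y) * S n xb y) + INR K / INR L.
Proof.
move=> hL hS hS1 hK; apply: (@exists_le_average _ _ _ [ffun=> Ordinal hL]).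
set NF := INR #|{: {ffun {ffun 'I_n -> A} -> 'I_L}}|.
have hNF : 0 <= NF by apply: pos_INR.
set c := INR K / INR L.
have hc : 0 <= c.
  by apply: Rmult_le_pos; [exact: pos_INR | apply: Rlt_le; apply: Rinv_0_lt_compat; exact: INR_gt0].
under eq_bigr => g _ do rewrite err_probE.
rewrite exchange_big /=; under eq_bigr => xb _ do rewrite exchange_big /=.
apply: (@Rle_trans _ (\big[Rplus/0]_(xb : {ffun 'I_n -> A}) \big[Rplus/0]_(y : {ffun 'I_n -> Y})
          (NF * (indR (xb \notin G y) + c) * S n xb y))).
  apply: Rsum_le => xb _; apply: Rsum_le => y _.
  by rewrite -Rsum_mulr; apply: Rmult_le_compat_r; [exact: hS | exact: bin_code_miss_sum].
have -> : \big[Rplus/0]_(xb : {ffun 'I_n -> A}) \big[Rplus/0]_(y : {ffun 'I_n -> Y})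
          (NF * (indR (xb \notin G y) + c) * S n xb y)
   = NF * (\big[Rplus/0]_(xb : {ffun 'I_n -> A}) \big[Rplus/0]_(y : {ffun 'I_n -> Y})
          (indR (xb \notin G y) * S n xb y))
     + NF * c * (\big[Rplus/0]_(xb : {ffun 'I_n -> A})
                   \big[Rplus/0]_(y : {ffun 'I_n -> Y}) S n xb y).
  rewrite !Rsum_mull -big_split /=; apply: eq_bigr => xb _.
  by rewrite !Rsum_mull -big_split /=; apply: eq_bigr => y _; ring.
have : NF * c * (\big[Rplus/0]_(xb : {ffun 'I_n -> A})
                    \big[Rplus/0]_(y : {ffun 'I_n -> Y}) S n xb y)
       <= NF * c * 1 by apply: Rmult_le_compat_l; [exact: Rmult_le_pos | exact: hS1].
by rewrite Rmult_plus_distr_l Rmult_1_r; apply: Rplus_le_compat_l.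
Qed.

End Binning.

Definition pbool (Q : Prop) : bool := if excluded_middle_informative Q then true else false.

Lemma pboolP (Q : Prop) : reflect Q (pbool Q).
Proof. by rewrite /pbool; case: excluded_middle_informative => h; constructor. Qed.

Section ListDecoding.
Variables (X Y : finType) (Pt : {set {set X}}) (Zn : Type) (n : nat).
Variables (c : code X Y Zn n) (fn : {ffun 'I_n -> X} -> {ffun 'I_n -> Y} -> Zn).
Variable xi : 'I_n -> (Y -> Zn) -> {set X}.
Hypothesis xiP : forall i a x y, xi i (fun b => fn (repl x i a) (repl y i b)) = pblock Pt a.
Implicit Types (x : {ffun 'I_n -> X}) (y : {ffun 'I_n -> Y}) (i : 'I_n) (k : nat).

Definition bad_coords x y : {set 'I_n} :=
  [set i | pbool (exists b, dec c (enc c x) (repl y i b) <> fn x (repl y i b))].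

Definition cell_estimate (m : 'I_(msize c)) y : {ffun 'I_n -> {set X}} :=
  [ffun i => xi i (fun b => dec c m (repl y i b))].

Definition candidates k y : {set {ffun 'I_n -> {set X}}} :=
  [set xb | [exists x, (cells Pt x == xb) && (#|bad_coords x y| <= k)%nat]].

Lemma cell_estimate_good x y i :
  i \notin bad_coords x y -> cell_estimate (enc c x) y i = pblock Pt (x i).
Proof.
rewrite inE => /pboolP hgood; rewrite ffunE -(xiP i (x i) x y); congr (xi i _).
apply: functional_extensionality => b; rewrite repl_id.
by apply: NNPP => hne; apply: hgood; exists b.
Qed.

(* Every candidate lies within distance [k] of the estimate read off some message. *)
Lemma card_candidates k V :
  (forall e : {ffun 'I_n -> {set X}},
     #|[set xb : {ffun 'I_n -> {set X}} | (#|[set i | xb i != e i]| <= k)%nat]| <= V)%nat ->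
  forall y, (#|candidates k y| <= msize c * V)%nat.
Proof.
move=> hV y.
apply: (@leq_trans #|[set xb : {ffun 'I_n -> {set X}} |
          [exists m, (#|[set i | xb i != cell_estimate m y i]| <= k)%nat]]|).
  apply: subset_leq_card; apply/subsetP => xb; rewrite !inE => /existsP[x /andP[/eqP hx hb]].
  apply/existsP; exists (enc c x); apply: leq_trans hb; apply: subset_leq_card.
  apply/subsetP => i; rewrite !inE; apply: contraR => hi.
  by rewrite -hx (cell_estimate_good (i := i)) ?inE // /cells ffunE.
apply: (leq_trans (card_exists_leq_sum (fun (m : 'I_(msize c)) (xb : {ffun 'I_n -> {set X}}) =>
  (#|[set i | xb i != cell_estimate m y i]| <= k)%nat))).
apply: (@leq_trans (\sum_(m : 'I_(msize c)) V)%nat); first by apply: leq_sum => m _; exact: hV.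
by rewrite sum_nat_const card_ord.
Qed.

Lemma indR_many_bad_le x y k : indR (~~ (#|bad_coords x y| <= k)%nat) <=
  / INR k.+1 * \big[Rplus/0]_i \big[Rplus/0]_(b : Y)
    miss (dec c (enc c x) (repl y i b) = fn x (repl y i b)).
Proof.
have hk := INR_gt0 (ltn0Sn k).
have hbad : INR #|bad_coords x y| <= \big[Rplus/0]_i \big[Rplus/0]_(b : Y)
    miss (dec c (enc c x) (repl y i b) = fn x (repl y i b)).
  rewrite -Rsum_indR; apply: Rsum_le => i _.
  rewrite /indR; case hi: (i \in bad_coords x y); last by apply: Rsum_ge0 => *; exact: miss_ge0.
  move: hi; rewrite inE => /pboolP [b hb]; rewrite (bigD1 b) //=.
  set others := (X in _ + X); have : 0 <= others by apply: Rsum_ge0 => *; exact: miss_ge0.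
  by rewrite /miss; case: excluded_middle_informative => //= _; lra.
apply: (Rle_trans _ (/ INR k.+1 * INR #|bad_coords x y|)); last first.
  by apply: Rmult_le_compat_l => //; apply: Rlt_le; apply: Rinv_0_lt_compat.
rewrite /indR; case: leqP => h.
  by apply: Rmult_le_pos; [apply: Rlt_le; apply: Rinv_0_lt_compat | exact: pos_INR].
have : INR k.+1 <= INR #|bad_coords x y| by apply: le_INR; apply/leP.
move=> h2; apply: (Rmult_le_reg_l (INR k.+1)) => //.
by rewrite -Rmult_assoc Rinv_r; lra.
Qed.

(* By smoothness, moving [y] to [repl y i b] changes its probability by a bounded factor. *)
Lemma Rsum_miss_repl_le (P : source X Y) q i b :
  0 < q < 1 -> (forall x y, 0 <= P n x y) ->
  (forall x (y y' : {ffun 'I_n -> Y}), hamming y y' = 1%nat -> P n x y' >= q * P n x y) ->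
  \big[Rplus/0]_x \big[Rplus/0]_y
     (miss (dec c (enc c x) (repl y i b) = fn x (repl y i b)) * P n x y)
  <= / q * (INR #|Y| * err_prob P fn c).
Proof.
move=> hq hP hs; have hq0 : 0 < / q by apply: Rinv_0_lt_compat; lra.
rewrite err_probE !Rsum_mull; apply: Rsum_le => x _.
apply: (@Rle_trans _ (/ q * \big[Rplus/0]_y
   (miss (dec c (enc c x) (repl y i b) = fn x (repl y i b)) * P n x (repl y i b)))).
  rewrite Rsum_mull; apply: Rsum_le => y _.
  have := smooth_repl_le i b hq (hs x) (hP x y).
  by move=> h; have := miss_ge0 (dec c (enc c x) (repl y i b) = fn x (repl y i b)); nra.
apply: Rmult_le_compat_l; first lra.
apply: (Rsum_repl_le (F := fun y => miss (dec c (enc c x) y = fn x y) * P n x y)) => y.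
exact: Rmult_le_pos (miss_ge0 _) (hP x y).
Qed.

Lemma Pr_many_bad_le (P : source X Y) q k :
  0 < q < 1 -> (forall x y, 0 <= P n x y) ->
  (forall x (y y' : {ffun 'I_n -> Y}), hamming y y' = 1%nat -> P n x y' >= q * P n x y) ->
  \big[Rplus/0]_x \big[Rplus/0]_y (indR (~~ (#|bad_coords x y| <= k)%nat) * P n x y)
  <= INR n / INR k.+1 * (INR #|Y| * (/ q * INR #|Y|)) * err_prob P fn c.
Proof.
move=> hq hP hs; have hk := INR_gt0 (ltn0Sn k).
have hk0 : 0 < / INR k.+1 by apply: Rinv_0_lt_compat.
pose F i b x y := miss (dec c (enc c x) (repl y i b) = fn x (repl y i b)) * P n x y.
apply: (@Rle_trans _ (/ INR k.+1 * \big[Rplus/0]_x \big[Rplus/0]_y \big[Rplus/0]_i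
                                 \big[Rplus/0]_(b : Y) F i b x y)).
  rewrite Rsum_mull; apply: Rsum_le => x _; rewrite Rsum_mull; apply: Rsum_le => y _.
  have -> : \big[Rplus/0]_i \big[Rplus/0]_(b : Y) F i b x y =
            (\big[Rplus/0]_i \big[Rplus/0]_(b : Y)
               miss (dec c (enc c x) (repl y i b) = fn x (repl y i b))) * P n x y.
    by rewrite Rsum_mulr; apply: eq_bigr => i _; rewrite Rsum_mulr.
  by rewrite -Rmult_assoc; apply: Rmult_le_compat_r; [exact: hP | exact: indR_many_bad_le].
rewrite Rsum_exchange4.
apply: (@Rle_trans _ (/ INR k.+1 * \big[Rplus/0]_(i : 'I_n) \big[Rplus/0]_(b : Y)
                                 (/ q * (INR #|Y| * err_prob P fn c)))).
  apply: Rmult_le_compat_l; first lra.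
  by apply: Rsum_le => i _; apply: Rsum_le => b _; exact: Rsum_miss_repl_le.
rewrite !Rsum_const card_ord; apply: Req_le; rewrite /Rdiv; ring.
Qed.

Lemma Pr_not_candidate_le (P : source X Y) k : (forall x y, 0 <= P n x y) ->
  \big[Rplus/0]_(xb : {ffun 'I_n -> {set X}}) \big[Rplus/0]_y
     (indR (xb \notin candidates k y) * quot_source Pt P xb y)
  <= \big[Rplus/0]_x \big[Rplus/0]_y (indR (~~ (#|bad_coords x y| <= k)%nat) * P n x y).
Proof.
move=> hP; rewrite (quot_source_sum Pt P (fun xb y => indR (xb \notin candidates k y))).
apply: Rsum_le => x _; apply: Rsum_le => y _; apply: Rmult_le_compat_r; first exact: hP.
case hb: (#|bad_coords x y| <= k)%nat; last by rewrite /indR /=; case: (_ \notin _); lra.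
have -> : cells Pt x \in candidates k y by rewrite inE; apply/existsP; exists x; rewrite eqxx hb.
by rewrite /indR /=; lra.
Qed.

End ListDecoding.

(* Upper bound on the number of sequences within distance [N %/ dd] of a given one, over an
   alphabet of size [a], coming from [hamming_ball_card]. *)
Definition ball_bound (a T0 dd N : nat) : nat := expn (T0 + a) N %/ expn T0 (N - N %/ dd).

Lemma ball_bound_gt0 a T0 dd N : (0 < T0)%nat -> (0 < ball_bound a T0 dd N)%nat.
Proof.
move=> hT0; rewrite divn_gt0 ?expn_gt0 ?hT0 //.
apply: (@leq_trans (expn T0 N)); first by apply: leq_pexp2l => //; exact: leq_subr.
by case: N => [|N] //; rewrite leq_exp2r // leq_addr.
Qed.

Lemma card_ball_le (T : finType) n (e : {ffun 'I_n -> T}) T0 dd : (0 < T0)%nat ->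
  (#|[set xb : {ffun 'I_n -> T} | (#|[set i | xb i != e i]| <= n %/ dd)%nat]|
     <= ball_bound #|T| T0 dd n)%nat.
Proof.
by move=> hT0; rewrite /ball_bound leq_divRL ?expn_gt0 ?hT0 //; exact: hamming_ball_card.
Qed.

Lemma ln_ball_bound_le a T0 dd N : (0 < dd)%nat -> (0 < T0)%nat ->
  ln (INR (ball_bound a T0 dd N)) <=
  INR N * (ln (INR (T0 + a)) - ln (INR T0)) + INR N / INR dd * ln (INR T0).
Proof.
move=> hdd hT0; set k := (N %/ dd)%nat.
have hV := INR_gt0 (ball_bound_gt0 a dd N hT0).
have hT := INR_gt0 hT0.
have hTA : 0 < INR (T0 + a) by apply: INR_gt0; rewrite addn_gt0 hT0.
have hdiv : (ball_bound a T0 dd N * expn T0 (N - k) <= expn (T0 + a) N)%nat by exact: leq_divM.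
have hln : ln (INR (ball_bound a T0 dd N)) + INR (N - k)%nat * ln (INR T0)
           <= INR N * ln (INR (T0 + a)).
  rewrite -ln_pow // -ln_pow // -ln_mult //; last exact: pow_lt.
  apply: ln_le; first by apply: Rmult_lt_0_compat => //; exact: pow_lt.
  by rewrite -!INR_expn -mult_INR; apply: le_INR; apply/leP.
rewrite INR_subn ?leq_div // in hln.
have hkd : INR k <= INR N / INR dd.
  have hd := INR_gt0 hdd.
  apply: (Rmult_le_reg_r (INR dd)) => //; rewrite /Rdiv Rmult_assoc Rinv_l; last lra.
  by rewrite Rmult_1_r -mult_INR; apply: le_INR; apply/leP; exact: leq_divM.
have : INR k * ln (INR T0) <= INR N / INR dd * ln (INR T0).
  by apply: Rmult_le_compat_r => //; exact: ln_nat_ge0.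
lra.
Qed.

(* First take [T0] large to make [ln (T0 + a) - ln T0] small, then [dd] large. *)
Lemma ball_bound_subexponential a eps : 0 < eps ->
  exists T0 dd, [/\ (0 < T0)%nat, (0 < dd)%nat &
    forall N, ln (INR (ball_bound a T0 dd N)) <= eps * INR N].
Proof.
move=> he.
have [T0 [hT0 hTa]] := exists_nat_div_le (INR a) (ltac:(lra) : 0 < eps / 2).
have [dd [hdd hdT]] := exists_nat_div_le (ln (INR T0)) (ltac:(lra) : 0 < eps / 2).
exists T0, dd; split => // N.
have hT := INR_gt0 hT0; have hd := INR_gt0 hdd; have hN := pos_INR N.
have hx : 0 < 1 + INR a / INR T0.
  have : 0 <= INR a / INR T0.
    by apply: Rmult_le_pos; [exact: pos_INR | apply: Rlt_le; apply: Rinv_0_lt_compat].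
  lra.
have hgap : ln (INR (T0 + a)) - ln (INR T0) <= eps / 2.
  have -> : ln (INR (T0 + a)) = ln (INR T0) + ln (1 + INR a / INR T0).
    by rewrite -ln_mult //; congr ln; rewrite plus_INR; field; lra.
  by have := ln_le_sub1 hx; lra.
apply: (Rle_trans _ _ _ (ln_ball_bound_le a N hdd hT0)).
have -> : INR N / INR dd * ln (INR T0) = INR N * (ln (INR T0) / INR dd) by field; lra.
have : INR N * (ln (INR T0) / INR dd) <= INR N * (eps / 2) by apply: Rmult_le_compat_l.
have : INR N * (ln (INR (T0 + a)) - ln (INR T0)) <= INR N * (eps / 2) by apply: Rmult_le_compat_l.
lra.
Qed.

Lemma div_succ_div_le n dd : (0 < dd)%nat -> INR n / INR (n %/ dd).+1 <= INR dd.
Proof.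
move=> hdd; have hk := INR_gt0 (ltn0Sn (n %/ dd)).
apply: (Rmult_le_reg_r (INR (n %/ dd).+1)) => //; rewrite /Rdiv Rmult_assoc Rinv_l; last lra.
rewrite Rmult_1_r -mult_INR; apply: le_INR; apply/leP.
by rewrite multE mulnC; exact: ltnW (ltn_ceil n hdd).
Qed.

Lemma informative_estimator (X Y : finType) (Pt : {set {set X}}) (Zn : Type) n
  (fn : {ffun 'I_n -> X} -> {ffun 'I_n -> Y} -> Zn) :
  informative Pt fn -> {xi : 'I_n -> (Y -> Zn) -> {set X} |
    forall i a x y, xi i (fun b => fn (repl x i a) (repl y i b)) = pblock Pt a}.
Proof.
move=> [hxi _].
exists (fun i => proj1_sig (constructive_indefinite_description _ (hxi i))) => i.
exact: proj2_sig (constructive_indefinite_description _ (hxi i)).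
Qed.

(* Candidates: the cell sequences of the [x] with at most [n %/ dd] bad coordinates; they
   are binned into [msize c * ball_bound * (n + 1)] bins. *)
Lemma SW_code_of_code (X Y : finType) (Pt : {set {set X}}) (Zn : Type) n (P : source X Y)
  (fn : {ffun 'I_n -> X} -> {ffun 'I_n -> Y} -> Zn) (c : code X Y Zn n) (x0 : X) dd T0 q :
  (0 < dd)%nat -> (0 < T0)%nat -> 0 < q < 1 -> informative Pt fn ->
  (forall x y, 0 <= P n x y) ->
  \big[Rplus/0]_(x : {ffun 'I_n -> X}) \big[Rplus/0]_(y : {ffun 'I_n -> Y}) P n x y = 1 ->
  (forall x (y y' : {ffun 'I_n -> Y}), hamming y y' = 1%nat -> P n x y' >= q * P n x y) ->
  exists cS : code {set X} Y {ffun 'I_n -> {set X}} n,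
    msize cS = (msize c * ball_bound #|{: {set X}}| T0 dd n * n.+1)%nat /\
    err_prob (quot_source Pt P) (@f_id {set X} Y n) cS <=
      INR dd * (INR #|Y| * (/ q * INR #|Y|)) * err_prob P fn c + / INR n.+1.
Proof.
move=> hdd hT0 hq hfn hP hP1 hs.
have [xi xiP] := informative_estimator hfn.
set k := (n %/ dd)%nat; set V := ball_bound #|{: {set X}}| T0 dd n.
have hG := card_candidates (fn := fn) (xi := xi) c xiP (fun e => card_ball_le e dd hT0).
have hK : (0 < msize c * V)%nat.
  by rewrite muln_gt0 (msize_gt0 c [ffun=> x0]) ball_bound_gt0.
have hL : (0 < msize c * V * n.+1)%nat by rewrite muln_gt0 hK.
have hQ1 : \big[Rplus/0]_(xb : {ffun 'I_n -> {set X}}) \big[Rplus/0]_(y : {ffun 'I_n -> Y})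
             quot_source Pt P xb y <= 1 by rewrite quot_source_total hP1; lra.
have [g hg] := exists_good_binning [ffun=> set0] hL (quot_source_ge0 Pt hP) hQ1 hG.
exists (bin_code [ffun=> set0] (candidates Pt c fn k) g); split => //.
apply: (Rle_trans _ _ _ hg).
have -> : INR (msize c * V) / INR (msize c * V * n.+1) = / INR n.+1.
  by rewrite (mult_INR (msize c * V) n.+1); field; split; apply: not_0_INR; lia.
apply: Rplus_le_compat_r.
apply: (Rle_trans _ _ _ (Pr_not_candidate_le Pt c fn k hP)).
apply: (Rle_trans _ _ _ (Pr_many_bad_le c fn k hq hP hs)).
have he := err_prob_ge0 fn c hP.
apply: Rmult_le_compat_r => //; apply: Rmult_le_compat_r; last exact: div_succ_div_le.
apply: Rmult_le_pos; first exact: pos_INR.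
by apply: Rmult_le_pos; [apply: Rlt_le; apply: Rinv_0_lt_compat; lra | exact: pos_INR].
Qed.

Lemma achievable_SW_of_achievable (X Y : finType) (Pt : {set {set X}}) (Z : nat -> Type)
  (f : forall n, {ffun 'I_n -> X} -> {ffun 'I_n -> Y} -> Z n) (P : source X Y)
  (HP : is_source P) (Hs : smooth_wrt_Y P) (Hf : forall n, informative Pt (f n)) (x0 : X) r :
  achievable P f r -> forall g, 0 < g -> achievable_SW (quot_source Pt P) (r + g).
Proof.
move=> [c [Hcv Hrate]] g hg; case: Hs => q [hq hs].
have hl2 := ln2_pos; have hgl : 0 < g / 4 * ln 2 by apply: Rmult_lt_0_compat; lra.
have [T0 [dd [hT0 hdd hball]]] := ball_bound_subexponential #|{: {set X}}| hgl.
set C := INR dd * (INR #|Y| * (/ q * INR #|Y|)).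
have hC : 0 <= C.
  apply: Rmult_le_pos; first exact: pos_INR; apply: Rmult_le_pos; first exact: pos_INR.
  by apply: Rmult_le_pos; [apply: Rlt_le; apply: Rinv_0_lt_compat; lra | exact: pos_INR].
have hcodes n : exists cS : code {set X} Y {ffun 'I_n -> {set X}} n, (0 < n)%nat ->
    msize cS = (msize (c n) * ball_bound #|{: {set X}}| T0 dd n * n.+1)%nat /\
    err_prob (quot_source Pt P) (@f_id {set X} Y n) cS <= C * err_prob P (f n) (c n) + / INR n.+1.
  case: (posnP n) => [-> | hn].
    by exists (bin_code [ffun=> set0] (fun _ => set0) [ffun=> (ord0 : 'I_1)]).
  have [hP hP1] := HP n hn.
  have [cS hcS] := SW_code_of_code (c n) x0 hdd hT0 hq (Hf n) hP hP1 (hs n).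
  by exists cS.
pose cS n := proj1_sig (constructive_indefinite_description _ (hcodes n)).
have hcS n : (0 < n)%nat -> _ := proj2_sig (constructive_indefinite_description _ (hcodes n)).
exists cS; split.
  apply: (Un_cv_squeeze (N := 1%nat) _ (Un_cv_affine C Hcv)) => n hn.
  split; last exact: (proj2 (hcS n hn)).
  by apply: err_prob_ge0; apply: quot_source_ge0; exact: (proj1 (HP n hn)).
move=> eps he.
have [N1 HN1] := Hrate (g / 4) ltac:(lra).
have [N2 HN2] := @ln_sublinear 1 (g / 4 * ln 2) ltac:(lra) hgl.
exists (maxn N1 N2) => n hn.
have h1 := HN1 n (leq_trans (leq_maxl _ _) hn).
have h2 := HN2 n (leq_trans (leq_maxr _ _) hn).
have hN := INR_gt0 (ltn0Sn n).
rewrite (proj1 (hcS n.+1 (ltn0Sn n))).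
have hM := msize_gt0 (c n.+1) [ffun=> x0].
have hV := ball_bound_gt0 #|{: {set X}}| dd n.+1 hT0.
rewrite log2_mul ?muln_gt0 ?hM ?hV // log2_mul // !Rdiv_plus_distr.
have hbV : log2 (INR (ball_bound #|{: {set X}}| T0 dd n.+1)) / INR n.+1 <= g / 4.
  by rewrite -[log2 _]Rmult_1_l; apply: log2_div_le; rewrite // Rmult_1_l; exact: hball.
have hbn : log2 (INR n.+2) / INR n.+1 <= g / 4 by rewrite -[log2 _]Rmult_1_l; exact: log2_div_le.
apply: (Rle_trans _ _ _ (Rplus_le_compat _ _ _ _ (Rplus_le_compat _ _ _ _ h1 hbV) hbn)); lra.
Qed.

Lemma achievable_SW_log_card (A Y : finType) (a0 : A) (P : source A Y) :
  achievable_SW P (log2 (INR #|A|)).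
Proof.
pose idcode n :=
  @Code A Y {ffun 'I_n -> A} n #|{: {ffun 'I_n -> A}}| enum_rank (fun m _ => enum_val m).
exists idcode; split.
  have h0 n : err_prob P (@f_id A Y n) (idcode n) = 0.
    rewrite /err_prob big1 // => x _; rewrite big1 // => y _.
    by case: excluded_middle_informative => // [[]]; rewrite /= enum_rankK.
  by move=> eps he; exists 0%nat => n _; rewrite h0 /R_dist Rminus_0_r Rabs_R0; lra.
move=> eps he; exists 0%nat => n _.
have hN := INR_gt0 (ltn0Sn n).
change (msize (idcode n.+1)) with #|{: {ffun 'I_n.+1 -> A}}|.
rewrite card_ffun card_ord log2_expn; last by apply/card_gt0P; exists a0.
rewrite /Rdiv Rmult_comm -Rmult_assoc Rinv_l; lra.
Qed.

Lemma achievable_SW_ge0 (A Y : finType) (a0 : A) (P : source A Y) r :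
  achievable_SW P r -> 0 <= r.
Proof.
case=> c [_ Hr]; apply: Rnot_lt_le => hr.
have [N HN] := Hr (- r / 2) ltac:(lra).
have h := HN N (leqnn N).
have hl := log2_nat_ge0 (msize_gt0 (c N.+1) [ffun=> a0]).
have hN := INR_gt0 (ltn0Sn N).
have : 0 <= log2 (INR (msize (c N.+1))) / INR N.+1.
  by apply: Rmult_le_pos => //; apply: Rlt_le; apply: Rinv_0_lt_compat.
lra.
Qed.

Theorem theorem1 (X Y : finType) (Pt : {set {set X}})
  (HPt : partition Pt [set: X])
  (Z : nat -> Type)
  (f : forall n : nat, {ffun 'I_n -> X} -> {ffun 'I_n -> Y} -> Z n)
  (Hf : forall n : nat, informative Pt (f n))
  (P : source X Y) (HP : is_source P) (Hsmooth : smooth_wrt_Y P) :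
  exists r : R,
    is_inf (achievable P f) r /\
    is_inf (achievable_SW (quot_source Pt P)) r.
Proof.
have [x0 _] : exists x0 : X, True.
  case: (pickP (@predT X)) => [x0 _|hX]; first by exists x0.
  have [_ h1] := HP 1%nat (ltnSn 0).
  by rewrite big1 in h1; [lra | move=> x _; have := hX (x ord0)].
apply: common_inf.
- by exists (log2 (INR #|{: {set X}}|)); exact: achievable_SW_log_card set0 _.
- exact: achievable_SW_ge0 set0 _.
- exact: achievable_SW_of_achievable HP Hsmooth Hf x0.
- exact: achievable_of_achievable_SW HP Hf x0.
Qed.
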